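(* Let $(a_N)$ be a sequence of positive numbers and, for each $N$, let $P_{N,a_N}$ be the probability on sequences $(n_j)_{j\ge0}$ of nonnegative integers with $\sum_jn_j=N$ given by $P_{N,a_N}((n_j))\propto e^{-a_N\sum_jjn_j}$, with $\langle n_0\rangle_{N,a_N}$ the expectation of $n_0$. Let $\lambda_N=1-m_N/N$ with integers $0\le m_N\le N$. Suppose $\lambda_N\to\lambda\le1$ and $(1-\lambda_N)Na_N-\ln N\to\infty$. Then $P_{N,a_N}(n_0/N\ge\lambda_N)\to1$ and $\lim_{N\to\infty}\frac1N\langle n_0\rangle_{N,a_N}\ge\lambda$. If $Na_N/\ln N\to\infty$, then $\frac1N\langle n_0\rangle_{N,a_N}\to1$, i.e. there is complete Bose–Einstein condensation.
   Context: This is the canonical ensemble of $N$ noninteracting bosons in a one-dimensional harmonic trap, $n_j$ being the occupation of the $j$-th level and $a_N=\beta(\varepsilon_1-\varepsilon_0)$. *)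

From HB Require Import structures.
From mathcomp Require Import all_boot all_order all_algebra finmap.
From mathcomp Require Import all_classical all_reals all_analysis.
Set Implicit Arguments. Unset Strict Implicit. Unset Printing Implicit Defensive.
Import Order.TTheory GRing.Theory Num.Theory.
Local Open Scope classical_set_scope.
Local Open Scope ring_scope.

Definition occ := {fsfun nat -> nat with 0%N}.

Definition occ_total (n : occ) : nat := (\sum_(j <- finsupp n) n j)%N.

Definition occ_energy (n : occ) : nat := (\sum_(j <- finsupp n) j * n j)%N.

Definition configs (N : nat) : set occ := [set n | occ_total n = N].

Definition bweight {R : realType} (a : R) (n : occ) : R :=
  expR (- a * (occ_energy n)%:R).

Definition Zpart {R : realType} (N : nat) (a : R) : \bar R :=
  esum (configs N) (fun n => (bweight a n)%:E).

Definition Pcan {R : realType} (N : nat) (a : R) (A : set occ) : R :=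
  fine (esum (configs N `&` A) (fun n => (bweight a n)%:E)) / fine (Zpart N a).

Definition mean_n0 {R : realType} (N : nat) (a : R) : R :=
  fine (esum (configs N) (fun n => ((n 0%N)%:R * bweight a n)%:E)) / fine (Zpart N a).

(* Write x = e^{-a}.  Moving every particle one level down (levels 0 and 1
   merge) is injective on the configurations with n_0 = N - k and divides
   their Boltzmann weight by x^k, so that slice has weight at most x^k Z_N.
   Summing over k > m, the event n_0 < N - m has probability at most
   N x^{m+1} = exp (- ((m + 1) a - ln N)), which tends to 0 under either
   hypothesis (with m_N = floor (d N) for any d > 0 in the second case).
   The Markov-type bound k P(n_0 >= k) <= <n_0> turns this into the lower
   bounds on <n_0>/N.  That Z_N is finite follows from
   Z_{N+1} <= Z_N / (1 - x): remove one particle from an occupied level. *)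

From HB Require Import structures.
From mathcomp Require Import all_boot all_order all_algebra finmap.
From mathcomp Require Import all_classical all_reals all_analysis.
From mathcomp.algebra_tactics Require Import lra.
From mathcomp.zify Require Import zify.
Import Order.TTheory GRing.Theory Num.Theory numFieldNormedType.Exports.
Local Open Scope classical_set_scope.
Local Open Scope ring_scope.

Section Occupations.
Local Open Scope nat_scope.
Implicit Types (n : occ) (w : nat -> nat).

Definition occ_bound n : nat := (\max_(j <- finsupp n) j).+1.

Lemma occ_bound_zero n j : occ_bound n <= j -> n j = 0.
Proof.
move=> bj; apply: contraTeq bj => /negbTE nj0; rewrite -ltnNge ltnS.
by apply: leq_bigmax_seq => //; rewrite mem_finsupp nj0.
Qed.

Lemma occ_bound_gt {n j} : 0 < n j -> j < occ_bound n.
Proof. by move=> nj; rewrite ltnNge; apply: contraTN nj => /occ_bound_zero ->. Qed.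

Definition occ_wsum w n : nat := \sum_(j <- finsupp n) w j * n j.

Lemma occ_wsumE {w n L} : (forall j, L <= j -> n j = 0) ->
  occ_wsum w n = \sum_(j < L) w j * n j.
Proof.
move=> nL; rewrite -(big_mkord xpredT (fun j => w j * n j)) (bigID (mem (finsupp n))) /=.
rewrite [X in _ = _ + X]big1 ?addn0 => [|j]; last first.
  by rewrite memNfinsupp => /eqP ->; rewrite muln0.
rewrite -big_filter; apply/perm_big/uniq_perm; rewrite ?filter_uniq ?iota_uniq //.
move=> j; rewrite mem_filter mem_iota add0n subn0 /=.
case: (boolP (j \in finsupp n)) => [jn|_]; rewrite ?andbF ?andbT //.
by apply/esym; rewrite ltnNge; apply/negP => /nL nj0; rewrite mem_finsupp nj0 in jn.
Qed.

Lemma occ_totalE n : occ_total n = occ_wsum (fun=> 1) n.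
Proof. by apply: eq_bigr => j _; rewrite mul1n. Qed.

Lemma occ_energyE n : occ_energy n = occ_wsum id n.
Proof. by []. Qed.

Lemma occ_le_total n j : n j <= occ_total n.
Proof.
rewrite occ_totalE (occ_wsumE (occ_bound_zero n)).
have [jL|/occ_bound_zero -> //] := ltnP j (occ_bound n).
by rewrite (bigD1 (Ordinal jL)) //= mul1n leq_addr.
Qed.

Definition occ_ground (N : nat) : occ := [fsfun [fsfun] with 0 |-> N].

Lemma occ_groundE N j : occ_ground N j = if j == 0 then N else 0.
Proof. by rewrite fsfun_withE fsfunE. Qed.

Lemma occ_wsum_ground w N : occ_wsum w (occ_ground N) = w 0 * N.
Proof.
rewrite (@occ_wsumE _ _ 1) ?big_ord1 ?occ_groundE // => j.
by rewrite occ_groundE; case: j.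
Qed.

Lemma configs0 : configs 0 = [set occ_ground 0].
Proof.
apply/seteqP; split => n /=; last by move->; rewrite /configs /= occ_totalE occ_wsum_ground.
move=> n0; apply/fsfunP => j; rewrite occ_groundE if_same.
by apply/eqP; rewrite -leqn0 -[X in _ <= X]n0 occ_le_total.
Qed.

Definition occ_remove n t : occ := [fsfun n with t |-> (n t).-1].

Lemma occ_removeE n t j : occ_remove n t j = if j == t then (n t).-1 else n j.
Proof. exact: fsfun_withE. Qed.

Lemma occ_wsum_remove w {n t} : 0 < n t ->
  occ_wsum w n = occ_wsum w (occ_remove n t) + w t.
Proof.
move=> nt; have tL := occ_bound_gt nt.
have rL j : occ_bound n <= j -> occ_remove n t j = 0.
  by rewrite occ_removeE; case: eqP => [->|_]; [rewrite leqNgt tL|exact: occ_bound_zero].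
rewrite (occ_wsumE (occ_bound_zero n)) (occ_wsumE rL).
rewrite (bigD1 (Ordinal tL)) // [in RHS](bigD1 (Ordinal tL)) //= occ_removeE eqxx.
rewrite addnAC -mulnSr prednK //; congr (_ + _); apply: eq_bigr => j.
by rewrite -val_eqE /= occ_removeE => /negPf ->.
Qed.

Lemma occ_remove_inj {n n' t} : 0 < n t -> 0 < n' t ->
  occ_remove n t = occ_remove n' t -> n = n'.
Proof.
move=> nt n't e; apply/fsfunP => j; move/fsfunP/(_ j): e; rewrite !occ_removeE.
by case: eqP => [->|//] e; rewrite -(prednK nt) -(prednK n't) e.
Qed.

Definition occupied_level n : nat := head 0 (finsupp n : seq nat).

Lemma occupied_levelP n : 0 < occ_total n -> 0 < n (occupied_level n).
Proof.
have : {in (finsupp n : seq nat), forall j, 0 < n j}.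
  by move=> j; rewrite -[j \in _]/(j \in finsupp n) mem_finsupp lt0n.
rewrite /occ_total /occupied_level.
case: (finsupp n : seq nat) => [_|j s nP _]; first by rewrite big_nil.
by rewrite nP ?mem_head.
Qed.

Definition occ_lower n : occ :=
  [fsfun j in (0 |` [fset i.-1 | i in finsupp n])%fset =>
     if j == 0 then n 0 + n 1 else n j.+1].

Lemma occ_lowerE n j : occ_lower n j = if j == 0 then n 0 + n 1 else n j.+1.
Proof.
rewrite fsfunE; case: ifPn => // jn; case: eqP jn => [->|_ jn]; first by rewrite !inE eqxx.
apply/esym/eqP; rewrite -[_ == _]/(n j.+1 == (fun=> 0) j.+1) -memNfinsupp.
apply: contra jn => nj; rewrite !inE; apply/orP; right.
by apply/imfsetP; exists j.+1.
Qed.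

Lemma occ_wsum_lower w n : occ_wsum w (occ_lower n) = occ_wsum (w \o predn) n.
Proof.
have nL j : (occ_bound n).+1 <= j -> n j = 0 by move/ltnW/occ_bound_zero.
have lL j : occ_bound n <= j -> occ_lower n j = 0.
  by rewrite occ_lowerE; case: j => [|j] //= /leqW /occ_bound_zero.
rewrite (occ_wsumE lL) (occ_wsumE nL) /occ_bound.
rewrite big_ord_recl [RHS]big_ord_recl [in RHS]big_ord_recl /= occ_lowerE /=.
rewrite mulnDr addnA; congr (_ + _); apply: eq_bigr => i _.
by rewrite occ_lowerE.
Qed.

Lemma occ_energy_lower n : occ_energy n + n 0 = occ_energy (occ_lower n) + occ_total n.
Proof.
rewrite !occ_energyE occ_totalE occ_wsum_lower !(occ_wsumE (occ_bound_zero n)) /occ_bound.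
rewrite !big_ord_recl /= !mul0n !add0n mul1n addnCA addnC; congr (_ + _).
by rewrite -big_split; apply: eq_bigr => i _; rewrite /bump leq0n add0n mul1n mulSnr.
Qed.

Lemma occ_lower_inj n n' : n 0 = n' 0 -> occ_lower n = occ_lower n' -> n = n'.
Proof.
move=> e0 /fsfunP e; apply/fsfunP => -[//|j].
case: j => [|j]; last by have := e j.+1; rewrite !occ_lowerE.
by have := e 0; rewrite !occ_lowerE /= e0 => /addnI.
Qed.

End Occupations.

Section EsumComplements.
Context {R : realType} {T : choiceType}.
Local Open Scope ereal_scope.
Implicit Types (S : set T) (f : T -> \bar R).

Lemma ge0_esumZl S f (c : R) : (0 <= c)%R -> (forall i, S i -> 0 <= f i) ->
  \esum_(i in S) (c%:E * f i) = c%:E * \esum_(i in S) f i.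
Proof.
move=> c0 f0; rewrite esum_mkcond [in RHS]esum_mkcond /esum -ereal_supZl //; last first.
  by apply/set0P; exists 0; exists set0; rewrite ?fsbig_set0 //; exact: fsets_set0.
rewrite image_comp; congr ereal_sup; apply: eq_imagel => A _ /=.
rewrite ge0_mule_fsumr => [|i]; last by case: ifPn => // /set_mem /f0.
by apply: eq_fsbigr => i _; case: ifP; rewrite ?mule0.
Qed.

Lemma lee_esum_subset S1 S2 f : S1 `<=` S2 -> (forall i, S2 i -> 0 <= f i) ->
  \esum_(i in S1) f i <= \esum_(i in S2) f i.
Proof.
move=> S12 f0; rewrite esum_mkcond [leRHS]esum_mkcond; apply: le_esum => i _.
by case: ifPn => [/set_mem/S12/mem_set -> //|_]; case: ifPn => // /set_mem /f0.
Qed.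

End EsumComplements.

Lemma esum_geometric_le (R : realType) (q : R) : 0 < q -> q < 1 ->
  (\esum_(t in [set: nat]) (q ^+ t)%:E <= ((1 - q)^-1)%:E)%E.
Proof.
move=> q0 q1; have qt_ge0 t : (0 <= (q ^+ t)%:E)%E by rewrite lee_fin exprn_ge0 ?ltW.
rewrite -nneseries_esumT //; apply: lime_le.
  exact: is_cvg_nneseries.
apply: nearW => n; rewrite /= sumEFin lee_fin.
have := @geometric_le_lim R n 1 q ler01 q0; rewrite gtr0_norm // mul1r => /(_ q1).
by rewrite /series /=; under eq_bigr do rewrite mul1r.
Qed.

Section PartitionFunction.
Context {R : realType} {a : R}.
Hypothesis a_gt0 : 0 < a.
Local Notation x := (expR (- a)).

Lemma bweightE n : bweight a n = x ^+ occ_energy n.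
Proof. by rewrite /bweight expRM_natr. Qed.

Lemma bweight_ge0 n : (0 <= (bweight a n)%:E)%E.
Proof. by rewrite lee_fin expR_ge0. Qed.

Lemma bweight_ground N : bweight a (occ_ground N) = 1.
Proof. by rewrite bweightE occ_energyE occ_wsum_ground. Qed.

Lemma Zpart_ge1 N : (1 <= Zpart N a)%E.
Proof.
apply: esum_ge; exists [set occ_ground N]; last by rewrite fsbig_set1 bweight_ground.
split; first exact: finite_set1.
by move=> _ ->; rewrite /configs /= occ_totalE occ_wsum_ground mul1n.
Qed.

Lemma Zpart0 : Zpart 0 a = 1%E.
Proof. by rewrite /Zpart configs0 esum_set1 ?bweight_ground ?bweight_ge0. Qed.

Lemma Zpart_succ_le N : (Zpart N.+1 a <= ((1 - x)^-1)%:E * Zpart N a)%E.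
Proof.
pose split_off (n : occ) := (occ_remove n (occupied_level n), occupied_level n).
have occupied n : configs N.+1 n -> (0 < n (occupied_level n))%N.
  by move=> nN; apply: occupied_levelP; rewrite nN.
have split_offK n : configs N.+1 n ->
    (bweight a n)%:E = (bweight a (split_off n).1 * x ^+ (split_off n).2)%:E.
  by move=> /occupied nt; rewrite !bweightE !occ_energyE (occ_wsum_remove _ nt) exprD.
have split_off_inj : set_inj (configs N.+1) split_off.
  move=> n n' /set_mem nN /set_mem n'N [e1 e2].
  move: e1; rewrite -e2 => /(occ_remove_inj (occupied _ nN)); apply.
  by rewrite e2; exact: occupied.
have split_off_sub : split_off @` configs N.+1 `<=` configs N `*`` (fun=> [set: nat]).
  move=> _ [n nN <-]; split => //=; apply/eqP; rewrite -eqSS /configs /=.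
  by rewrite occ_totalE -addn1 -(occ_wsum_remove _ (occupied _ nN)) -occ_totalE nN.
rewrite /Zpart (eq_esum split_offK).
rewrite -(esum_image _ _ (fun p => (bweight a p.1 * x ^+ p.2)%:E)) //.
have x_lt1 : x < 1 by rewrite expR_lt1 oppr_lt0.
have term_ge0 c t : (0 <= (bweight a c * x ^+ t)%:E)%E.
  by rewrite EFinM mule_ge0 ?bweight_ge0.
apply: le_trans (lee_esum_subset _ _ _ split_off_sub (fun p _ => term_ge0 p.1 p.2)) _.
rewrite -(esum_esum (a := fun c t => (bweight a c * x ^+ t)%:E)); last first.
  by move=> c t _ _; exact: term_ge0.
rewrite -(ge0_esumZl _ (fun n => (bweight a n)%:E)) => [||c _]; last 2 first.
- by rewrite invr_ge0 subr_ge0 ltW.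
- exact: bweight_ge0.
apply: le_esum => c _; under eq_esum do rewrite EFinM.
rewrite ge0_esumZl ?expR_ge0 // muleC lee_wpmul2r ?bweight_ge0 //.
exact: esum_geometric_le (expR_gt0 _) x_lt1.
Qed.

Lemma Zpart_le N : (Zpart N a <= (((1 - x)^-1) ^+ N)%:E)%E.
Proof.
elim: N => [|N IH]; first by rewrite Zpart0 expr0.
apply: le_trans (Zpart_succ_le N) _; rewrite exprS EFinM lee_wpmul2l //.
by rewrite lee_fin invr_ge0 subr_ge0 ltW // expR_lt1 oppr_lt0.
Qed.

Lemma Zpart_fin_num N : Zpart N a \is a fin_num.
Proof.
rewrite ge0_fin_numE; first by apply: le_lt_trans (Zpart_le N) _; rewrite ltry.
exact: le_trans (Zpart_ge1 N).
Qed.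

Lemma esum_ground_slice_le N k : (k <= N)%N ->
  (\esum_(n in configs N `&` [set n | n 0%N = (N - k)%N]) (bweight a n)%:E
    <= (x ^+ k)%:E * Zpart N a)%E.
Proof.
move=> kN; set S := _ `&` _.
have lowerK n : S n -> (bweight a n)%:E = ((x ^+ k)%:E * (bweight a (occ_lower n))%:E)%E.
  move=> [nN n0]; rewrite -EFinM !bweightE -exprD; congr (_ ^+ _)%:E.
  by have := occ_energy_lower n; rewrite n0 (nN : occ_total n = N); lia.
rewrite (eq_esum lowerK) ge0_esumZl ?exprn_ge0 ?expR_ge0 // => [|n _]; last exact: bweight_ge0.
rewrite lee_wpmul2l ?lee_fin ?exprn_ge0 ?expR_ge0 //.
rewrite -(esum_image _ _ (fun n => (bweight a n)%:E)); last first.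
  by move=> n n' /set_mem[_ n0] /set_mem[_ n'0]; apply: occ_lower_inj; rewrite n0 n'0.
apply: lee_esum_subset => [_ [n [nN _] <-]|n _]; last exact: bweight_ge0.
by move: nN; rewrite /configs /= !occ_totalE occ_wsum_lower; exact: id.
Qed.

Lemma esum_depleted_le N m :
  (\esum_(n in configs N `&` ~` [set n | N - m <= n 0%N]%N) (bweight a n)%:E
    <= (N%:R * x ^+ m.+1)%:E * Zpart N a)%E.
Proof.
pose slice k := [set n : occ | n 0%N = N - k]%N.
pose ind n k := if n \in slice k then (bweight a n)%:E else 0%E.
have ind_ge0 n k : (0 <= ind n k)%E by rewrite /ind; case: ifP => // _; exact: bweight_ge0.
(* A configuration with n_0 < N - m lies in the slice k := N - n_0, and m < k <= N. *)
apply: (@le_trans _ _ (\esum_(n in configs N) \sum_(m.+1 <= k < N.+1) ind n k)).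
  rewrite esum_mkcondr; apply: le_esum => n nN; case: ifPn => [|_]; last exact: sume_ge0.
  move/set_mem/negP; rewrite -ltnNge => n0_lt.
  have n0_le : (n 0%N <= N)%N by rewrite -[X in (_ <= X)%N]nN occ_le_total.
  rewrite (bigD1_seq (N - n 0%N)%N) ?iota_uniq ?mem_index_iota /= => [||//]; last first.
    by move: (n 0%N) n0_lt n0_le => j; lia.
  have -> : ind n (N - n 0%N)%N = (bweight a n)%:E by rewrite /ind mem_set // /slice /= subKn.
  by rewrite leeDl // sume_ge0.
rewrite (@esum_sum _ _ _ _ _ _ ind) => [|n k _ _]; last exact: ind_ge0.
apply: (@le_trans _ _ (\sum_(m.+1 <= k < N.+1) ((x ^+ m.+1)%:E * Zpart N a)%E)).
  rewrite big_nat_cond [leRHS]big_nat_cond; apply: lee_sum => k /andP[/andP[mk kN] _].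
  rewrite /ind -esum_mkcondr; apply: le_trans (esum_ground_slice_le N k kN) _.
  rewrite lee_wpmul2r ?lee_fin ?(le_trans _ (Zpart_ge1 N)) //.
  by rewrite ler_wiXn2l // ?expR_ge0 // ltW // expR_lt1 oppr_lt0.
rewrite -ge0_sume_distrl => [|k _]; last by rewrite lee_fin exprn_ge0 ?expR_ge0.
rewrite sumEFin lee_wpmul2r ?(le_trans _ (Zpart_ge1 N)) // lee_fin sumr_const_nat.
by rewrite -[_ *+ _]mulr_natl ler_wpM2r ?exprn_ge0 ?expR_ge0 // ler_nat subSS leq_subr.
Qed.

End PartitionFunction.

Section ErealFine.
Context {R : realType}.
Implicit Types (y z : \bar R).

Lemma fin_num_ge0_le {y z} : (0 <= y)%E -> (y <= z)%E -> z \is a fin_num -> y \is a fin_num.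
Proof. by move=> y0 yz zf; rewrite ge0_fin_numE // (le_lt_trans yz) // ltey_eq zf. Qed.

Lemma fine_le_mulr (c : R) y z : (0 <= y)%E -> z \is a fin_num ->
  (y <= c%:E * z)%E -> fine y <= c * fine z.
Proof.
move=> y0 zf; rewrite -[in X in (_ <= X)%E -> _](fineK zf) -EFinM.
by case: y y0 => [r _|//|//]; rewrite lee_fin.
Qed.

End ErealFine.

Section CanonicalEnsemble.
Context {R : realType} {a : R}.
Hypothesis a_gt0 : 0 < a.
Local Notation x := (expR (- a)).
Implicit Types (A : set occ).

Lemma fine_Zpart_gt0 N : 0 < fine (Zpart N a).
Proof.
by rewrite -lte_fin fineK ?Zpart_fin_num // (lt_le_trans _ (Zpart_ge1 N)) ?lte_fin.
Qed.

Lemma esum_configsI_le N A :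
  (\esum_(n in configs N `&` A) (bweight a n)%:E <= Zpart N a)%E.
Proof. by apply: lee_esum_subset => // n _; exact: bweight_ge0. Qed.

Lemma esum_configsI_fin_num N A :
  \esum_(n in configs N `&` A) (bweight a n)%:E \is a fin_num.
Proof.
apply: fin_num_ge0_le _ (esum_configsI_le N A) (Zpart_fin_num a_gt0 N).
by apply: esum_ge0 => n _; exact: bweight_ge0.
Qed.

Lemma Pcan_ge0 N A : 0 <= Pcan N a A.
Proof. by rewrite /Pcan divr_ge0 // fine_ge0 // esum_ge0 // => n _; exact: bweight_ge0. Qed.

Lemma Pcan_le1 N A : Pcan N a A <= 1.
Proof.
rewrite /Pcan ler_pdivrMr ?fine_Zpart_gt0 // mul1r.
by apply: fine_le; rewrite ?esum_configsI_fin_num ?Zpart_fin_num ?esum_configsI_le.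
Qed.

Lemma PcanC N A : Pcan N a A = 1 - Pcan N a (~` A).
Proof.
apply/eqP; rewrite eq_sym subr_eq -mulrDl -fineD ?esum_configsI_fin_num //.
rewrite -esumID => [|n _]; last exact: bweight_ge0.
by rewrite divff // gt_eqF // fine_Zpart_gt0.
Qed.

Lemma Pcan_depleted_le N m :
  Pcan N a (~` [set n | N - m <= n 0%N]%N) <= N%:R * x ^+ m.+1.
Proof.
rewrite /Pcan ler_pdivrMr ?fine_Zpart_gt0 //; apply: fine_le_mulr.
- by apply: esum_ge0 => n _; exact: bweight_ge0.
- exact: Zpart_fin_num.
- exact: esum_depleted_le.
Qed.

Lemma Pcan_condensed_ge N m :
  1 - N%:R * x ^+ m.+1 <= Pcan N a [set n | N - m <= n 0%N]%N.
Proof. by rewrite PcanC lerD2l lerN2 Pcan_depleted_le. Qed.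

Lemma esum_ground_occupation_le N :
  (\esum_(n in configs N) ((n 0%N)%:R * bweight a n)%:E <= N%:R%:E * Zpart N a)%E.
Proof.
rewrite -ge0_esumZl => [|//|n _]; last exact: bweight_ge0.
apply: le_esum => n nN; rewrite -EFinM lee_fin ler_wpM2r ?expR_ge0 // ler_nat.
by rewrite -[X in (_ <= X)%N]nN occ_le_total.
Qed.

Lemma mean_n0_le N : mean_n0 N a <= N%:R.
Proof.
rewrite /mean_n0 ler_pdivrMr ?fine_Zpart_gt0 //; apply: fine_le_mulr.
- by apply: esum_ge0 => n _; rewrite lee_fin mulr_ge0 ?expR_ge0.
- exact: Zpart_fin_num.
- exact: esum_ground_occupation_le.
Qed.

Lemma mean_n0_ge N k : k%:R * Pcan N a [set n | k <= n 0%N]%N <= mean_n0 N a.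
Proof.
rewrite /Pcan /mean_n0 mulrA ler_pM2r ?invr_gt0 ?fine_Zpart_gt0 //.
set B := [set n | k <= n 0%N]%N; set M := esum (configs N) _.
have M_fin : M \is a fin_num.
  apply: fin_num_ge0_le _ (esum_ground_occupation_le N) _.
    by apply: esum_ge0 => n _; rewrite lee_fin mulr_ge0 ?expR_ge0.
  by rewrite fin_numM ?Zpart_fin_num.
rewrite -[k%:R]/(fine k%:R%:E) -fineM ?esum_configsI_fin_num //.
apply: fine_le; rewrite ?fin_numM ?esum_configsI_fin_num //.
rewrite -ge0_esumZl => [|//|n _]; last exact: bweight_ge0.
apply: (@le_trans _ _ (\esum_(n in configs N `&` B) ((n 0%N)%:R * bweight a n)%:E)).
  by apply: le_esum => n [_ Bn]; rewrite -EFinM lee_fin ler_wpM2r ?expR_ge0 ?ler_nat.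
by apply: lee_esum_subset => // n _; rewrite lee_fin mulr_ge0 ?expR_ge0.
Qed.

Lemma mean_fraction_ge {N m} : (0 < N)%N -> (m <= N)%N ->
  (1 - m%:R / N%:R) * Pcan N a [set n | N - m <= n 0%N]%N <= mean_n0 N a / N%:R.
Proof.
move=> N_gt0 mN; rewrite ler_pdivlMr ?ltr0n // mulrAC mulrBl mul1r.
rewrite divfK ?pnatr_eq0 -?lt0n //.
by rewrite -natrB //; exact: mean_n0_ge.
Qed.

End CanonicalEnsemble.

Lemma le_limn_einf (R : realType) (u v : (\bar R)^nat) :
  (\forall N \near \oo, (u N <= v N)%E) -> (limn_einf u <= limn_einf v)%E.
Proof.
move=> [k _ uv]; rewrite !limn_einf_lim; apply: lee_lim; try exact: is_cvg_einfs.
exists k => // N /= kN; apply: le_ereal_inf_tmp => _ [j /= Nj <-].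
apply: le_trans (uv j (leq_trans kN Nj)); by apply: ereal_inf_lbound; exists j.
Qed.

Lemma cvgn_ln (R : realType) : (ln n%:R : R) @[n --> \oo] --> +oo.
Proof.
apply/cvgryPge => A; near=> n; rewrite -ler_expR lnK ?posrE; last first.
  by rewrite ltr0n; near: n; exact: nbhs_infty_gt.
by near: n; exact: nbhs_infty_ger.
Unshelve. all: by end_near.
Qed.

Lemma natr_expRX (R : realType) (a : R) (N k : nat) : (0 < N)%N ->
  N%:R * expR (- a) ^+ k = expR (- (k%:R * a - ln N%:R)).
Proof.
by move=> N_gt0; rewrite opprB expRD lnK ?posrE ?ltr0n // -expRM_natr mulNr [a * _]mulrC.
Qed.

Lemma condensed_prob_cvg {R : realType} {a : nat -> R} {m : nat -> nat} :
  (forall N, 0 < a N) ->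
  (fun N => (m N).+1%:R * a N - ln N%:R) @ \oo --> +oo ->
  (fun N => Pcan N (a N) [set n | N - m N <= n 0%N]%N) @ \oo --> (1 : R).
Proof.
move=> a_gt0 u_cvg.
apply: (@squeeze_cvgr _ _ _ _ (fun N => 1 - expR (- ((m N).+1%:R * a N - ln N%:R))) (fun=> 1)).
- near=> N; rewrite Pcan_le1 ?andbT //; apply: le_trans (Pcan_condensed_ge (a_gt0 N) N (m N)).
  rewrite natr_expRX //; near: N; exact: nbhs_infty_gt.
- rewrite -[X in _ --> X]subr0; apply: cvgB; first exact: cvg_cst.
  by apply: (cvg_comp _ (fun x => expR (- x)) u_cvg); exact: cvgr_expR.
- exact: cvg_cst.
Unshelve. all: by end_near.
Qed.

Lemma ground_fraction_liminf (R : realType) (a : nat -> R) (m : nat -> nat) (lam : R) :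
  (forall N, 0 < a N) -> (forall N, (m N <= N)%N) ->
  (fun N => 1 - (m N)%:R / N%:R) @ \oo --> lam ->
  (fun N => Pcan N (a N) [set n | N - m N <= n 0%N]%N) @ \oo --> (1 : R) ->
  (lam%:E <= limn_einf (fun N => (mean_n0 N (a N) / N%:R)%:E))%E.
Proof.
move=> a_gt0 m_le lam_cvg P_cvg.
have lamP_cvg : (fun N => ((1 - (m N)%:R / N%:R) *
    Pcan N (a N) [set n | N - m N <= n 0%N]%N)%:E) @ \oo --> lam%:E.
  by apply: cvg_EFin; [exact: nearW | rewrite -[lam]mulr1; exact: cvgM].
rewrite -(cvg_limn_einf_sup lamP_cvg).1; apply: le_limn_einf; near=> N.
have N_gt0 : (0 < N)%N by near: N; exact: nbhs_infty_gt.
by rewrite lee_fin (mean_fraction_ge (a_gt0 N) N_gt0 (m_le N)).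
Unshelve. all: by end_near.
Qed.

Lemma truncn_exponent_cvgy {R : realType} {a : nat -> R} {d : R} :
  (forall N, 0 < a N) -> 0 < d ->
  (fun N => N%:R * a N / ln N%:R) @ \oo --> +oo ->
  (fun N => (Num.truncn (d * N%:R)).+1%:R * a N - ln N%:R) @ \oo --> +oo.
Proof.
move=> a_gt0 d_gt0 r_cvg; apply: ger_cvgy (cvgn_ln R); near=> N.
have lnN_gt0 : 0 < ln (N%:R : R).
  by apply: ln_gt0; rewrite ltr1n; near: N; exact: nbhs_infty_gt.
have : 2 / d <= N%:R * a N / ln N%:R by near: N; exact: cvgry_ge r_cvg (2 / d).
rewrite ler_pdivlMr // mulrAC ler_pdivrMr // => lnN_le.
have : d * N%:R * a N <= (Num.truncn (d * N%:R)).+1%:R * a N.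
  by rewrite ler_pM2r // ltW // truncnS_gt.
nra.
Unshelve. all: by end_near.
Qed.

Lemma complete_condensation (R : realType) (a : nat -> R) :
  (forall N, 0 < a N) ->
  (fun N => N%:R * a N / ln N%:R) @ \oo --> +oo ->
  (fun N => mean_n0 N (a N) / N%:R) @ \oo --> (1 : R).
Proof.
move=> a_gt0 r_cvg; apply/cvgrPdist_lt => e e_gt0.
pose d := e / (e + 2).
have e2_gt0 : 0 < e + 2 by lra.
have d_gt0 : 0 < d by rewrite divr_gt0.
have d_lt_e : d < e by rewrite ltr_pdivrMr //; nra.
have d_lt1 : d < 1 by rewrite ltr_pdivrMr // mul1r; lra.
pose m N := Num.truncn (d * N%:R).
have m_le_dN N : (m N)%:R <= d * N%:R by rewrite truncn_le mulr_ge0 ?ler0n // ltW.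
have mN N : (m N <= N)%N.
  by rewrite -(ler_nat R) (le_trans (m_le_dN N)) // ler_piMl ?ler0n // ltW.
have P_cvg := condensed_prob_cvg a_gt0 (truncn_exponent_cvgy a_gt0 d_gt0 r_cvg).
have dP_cvg : (fun N => (1 - d) * Pcan N (a N) [set n | N - m N <= n 0%N]%N)
    @ \oo --> 1 - d.
  by rewrite -[X in _ --> X]mulr1; apply: cvgM; [exact: cvg_cst | exact: P_cvg].
near=> N.
have N_gt0 : (0 < N)%N by near: N; exact: nbhs_infty_gt.
have mean_le1 : mean_n0 N (a N) / N%:R <= 1.
  by rewrite ler_pdivrMr ?ltr0n // mul1r mean_n0_le.
rewrite ger0_norm ?subr_ge0 // ltrBlDr -ltrBlDl.
apply: lt_le_trans (mean_fraction_ge (a_gt0 N) N_gt0 (mN N)).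
apply: (@lt_le_trans _ _ ((1 - d) * Pcan N (a N) [set n | N - m N <= n 0%N]%N)).
  by near: N; apply: (cvgr_gt (1 - d) dP_cvg); lra.
by rewrite ler_wpM2r ?Pcan_ge0 // lerD2l lerN2 ler_pdivrMr ?ltr0n // m_le_dN.
Unshelve. all: by end_near.
Qed.

Lemma ground_fraction_setE (R : realType) (N m : nat) : (0 < N)%N -> (m <= N)%N ->
  [set n : occ | 1 - (m%:R : R) / N%:R <= (n 0%N)%:R / N%:R] = [set n | N - m <= n 0%N]%N.
Proof.
move=> N_gt0 mN; apply/seteqP; split => n /=;
  rewrite ler_pdivlMr ?ltr0n // mulrBl mul1r divfK ?pnatr_eq0 -?lt0n //;
  by rewrite lerBlDr -natrD ler_nat; lia.
Qed.

Theorem proposition3 (R : realType) (a : nat -> R) (m : nat -> nat) (lam : R) :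
  (forall N, 0 < a N) ->
  (forall N, (m N <= N)%N) ->
  ((let lamN : nat -> R := fun N : nat => 1 - (m N)%:R / N%:R in
    lamN @ \oo --> lam ->
    lam <= 1 ->
    (fun N : nat => (1 - lamN N) * N%:R * a N - ln N%:R) @ \oo --> +oo ->
    (fun N : nat =>
       Pcan N (a N) [set n : occ | lamN N <= (n 0%N)%:R / N%:R]) @ \oo --> (1 : R)
    /\ (lam%:E <= limn_einf (fun N : nat => (mean_n0 N (a N) / N%:R)%:E))%E)
  /\
  ((fun N : nat => N%:R * a N / ln N%:R) @ \oo --> +oo ->
    (fun N : nat => mean_n0 N (a N) / N%:R) @ \oo --> (1 : R))).
Proof.
move=> a_gt0 m_le; split; last exact: complete_condensation.
move=> lamN lam_cvg _ u_cvg.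
have P_cvg : (fun N => Pcan N (a N) [set n | N - m N <= n 0%N]%N) @ \oo --> (1 : R).
  apply: (condensed_prob_cvg a_gt0); apply: ger_cvgy u_cvg; near=> N.
  have N_gt0 : (0 < N)%N by near: N; exact: nbhs_infty_gt.
  have -> : (1 - lamN N) * N%:R = (m N)%:R.
    by rewrite /lamN opprB addrCA subrr addr0 divfK // pnatr_eq0 -lt0n.
  by rewrite lerD2r (ler_pM2r (a_gt0 N)) ler_nat.
split; last exact: ground_fraction_liminf a_gt0 m_le lam_cvg P_cvg.
apply: cvg_trans P_cvg; apply: near_eq_cvg; near=> N.
rewrite /lamN ground_fraction_setE //; near: N; exact: nbhs_infty_gt.
Unshelve. all: by end_near.
Qed.
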